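(* Fix $R_t>0$, $R_s=2^{R_t}$, all parameters $p_B,p_E,m_B,m_E,K_{B,r},K_{E,r}$ ($r=1,2$) and $\bar\gamma_E$, and regard the secrecy outage probability $P_o=\int_0^\infty F_B(R_s\gamma+R_s-1)f_E(\gamma)\,d\gamma$ as a function of $\bar\gamma_B$. Then the secrecy diversity order is $$G_d:=-\lim_{\bar\gamma_B\to\infty}\frac{\log P_o}{\log\bar\gamma_B}=1,$$ independently of $m_\ell$, $K_{\ell,r}$ and $p_\ell$.
   Context: Setting. For each $\ell\in\{B,E\}$ (legitimate receiver $B$, eavesdropper $E$) fix parameters $p_\ell\in[0,1]$, $m_\ell>0$, $K_{\ell,1},K_{\ell,2}>0$ and $\bar\gamma_\ell>0$; put $\bar K_\ell=p_\ell K_{\ell,1}+(1-p_\ell)K_{\ell,2}$, $Q_{\ell,1}=p_\ell$, $Q_{\ell,2}=1-p_\ell$. For $r\in\{1,2\}$ and $\gamma\ge0$ let $f_{RS,\ell,r}(\gamma)=\frac{1+\bar K_\ell}{\bar\gamma_\ell}\big(\frac{m_\ell}{m_\ell+K_{\ell,r}}\big)^{m_\ell}\exp\big(-\frac{(1+\bar K_\ell)\gamma}{\bar\gamma_\ell}\big)\,{}_1F_1\big(m_\ell;1;\frac{K_{\ell,r}(1+\bar K_\ell)\gamma}{\bar\gamma_\ell(m_\ell+K_{\ell,r})}\big)$ and $F_{RS,\ell,r}(\gamma)=\int_0^\gamma f_{RS,\ell,r}(t)\,dt$, where ${}_1F_1$ is Kummer's confluent hypergeometric function. The Alternate Rician Shadowed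 (ARS) SNR $\gamma_\ell$ has density $f_\ell=Q_{\ell,1}f_{RS,\ell,1}+Q_{\ell,2}f_{RS,\ell,2}$ and CDF $F_\ell=Q_{\ell,1}F_{RS,\ell,1}+Q_{\ell,2}F_{RS,\ell,2}$ on $[0,\infty)$; $\gamma_B,\gamma_E$ are independent. *)

From Stdlib Require Import Reals.
From Coquelicot Require Import Coquelicot.
Open Scope R_scope.

Fixpoint pochhammer (a : R) (n : nat) : R :=
  match n with
  | O => 1
  | S k => pochhammer a k * (a + INR k)
  end.

Definition hyp1F1 (a b z : R) : R :=
  Series (fun n => pochhammer a n / pochhammer b n * z ^ n / INR (Factorial.fact n)).

Definition Kbar (p K1 K2 : R) : R := p * K1 + (1 - p) * K2.

Definition f_RS (p m K1 K2 gbar Kr g : R) : R :=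
  (1 + Kbar p K1 K2) / gbar * Rpower (m / (m + Kr)) m
  * exp (- ((1 + Kbar p K1 K2) * g / gbar))
  * hyp1F1 m 1 (Kr * (1 + Kbar p K1 K2) * g / (gbar * (m + Kr))).

Definition F_RS (p m K1 K2 gbar Kr g : R) : R :=
  RInt (f_RS p m K1 K2 gbar Kr) 0 g.

(* ARS density and CDF: Q1 = p, Q2 = 1 - p. *)
Definition f_ARS (p m K1 K2 gbar g : R) : R :=
  p * f_RS p m K1 K2 gbar K1 g + (1 - p) * f_RS p m K1 K2 gbar K2 g.

Definition F_ARS (p m K1 K2 gbar g : R) : R :=
  p * F_RS p m K1 K2 gbar K1 g + (1 - p) * F_RS p m K1 K2 gbar K2 g.

Definition Rs (Rt : R) : R := Rpower 2 Rt.

Definition Pout (Rt pB mB KB1 KB2 gB pE mE KE1 KE2 gE : R) : R :=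
  RInt_gen
    (fun g => F_ARS pB mB KB1 KB2 gB (Rs Rt * g + Rs Rt - 1) * f_ARS pE mE KE1 KE2 gE g)
    (at_point 0) (Rbar_locally p_infty).

(* The proof shows that P_o(gB) is of exact order 1/gB, i.e.
   D/gB <= P_o(gB) <= M/gB for gB >= 1, and then takes logarithms.

   1. Kummer's function 1F1(m;1;z) is a power series with positive coefficients
      (m)_n/(n!)^2 and infinite radius; hence 1 <= 1F1(m;1;z) <= C e^{beta z}
      for z >= 0 and every beta > 1.
   2. Writing the Rician-shadowed density as A c e^{-A g} 1F1(m;1;kappa A g)
      with scale A = (1 + Kbar)/gbar and kappa = Kr/(m+Kr) < 1, step 1 gives:
      the density is at most A C (so the CDF is O(A x)), at least A c e^{-A g}
      (so the CDF is at least A c x e^{-A x}), and decays exponentially.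
   3. These bounds pass to the ARS mixtures, since convex combinations
      preserve common bounds.
   4. Hence the outage integrand is at most (K/gB) (g+1) e^{-d g}, which has a
      finite integral, and at least D/gB on [0, 1]; the improper integral of a
      nonnegative function with bounded partial integrals exists and is
      squeezed accordingly.
   5. ln P_o / ln gB is squeezed between (ln D - ln gB)/ln gB and
      (ln M - ln gB)/ln gB, both tending to -1. *)

From Stdlib Require Import Reals Lra Lia.
From Coquelicot Require Import Coquelicot.
Open Scope R_scope.

(* (1)_n = n!, so the denominators (1)_n n! of 1F1(m;1;z) are (n!)^2. *)
Lemma pochhammer_one (n : nat) : pochhammer 1 n = INR (Factorial.fact n).
Proof.
  induction n as [|n IH]; simpl pochhammer; [simpl; lra|].
  rewrite IH; change (Factorial.fact (S n)) with (S n * Factorial.fact n)%nat.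
  rewrite mult_INR, S_INR; ring.
Qed.

Lemma pochhammer_pos (m : R) (n : nat) : 0 < m -> 0 < pochhammer m n.
Proof.
  intros Hm; induction n as [|n IH]; simpl; [lra|].
  apply Rmult_lt_0_compat; [exact IH|]; pose proof (pos_INR n); lra.
Qed.

Definition kummer_coef (m : R) (n : nat) : R :=
  pochhammer m n / (INR (Factorial.fact n) * INR (Factorial.fact n)).

Lemma hyp1F1_PSeries (m z : R) : hyp1F1 m 1 z = PSeries (kummer_coef m) z.
Proof.
  unfold hyp1F1, PSeries; apply Series_ext; intros n.
  rewrite pochhammer_one; unfold kummer_coef.
  pose proof (INR_fact_neq_0 n); field; auto.
Qed.

Lemma kummer_coef_pos (m : R) (n : nat) : 0 < m -> 0 < kummer_coef m n.
Proof.
  intros Hm; unfold kummer_coef; apply Rdiv_lt_0_compat; [now apply pochhammer_pos|].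
  pose proof (INR_fact_lt_0 n); nra.
Qed.

Lemma kummer_coef_ratio (m : R) (n : nat) : 0 < m ->
  kummer_coef m (S n) / kummer_coef m n = (m + INR n) / ((INR n + 1) * (INR n + 1)).
Proof.
  intros Hm; unfold kummer_coef; simpl pochhammer.
  change (Factorial.fact (S n)) with (S n * Factorial.fact n)%nat.
  rewrite mult_INR, S_INR.
  pose proof (INR_fact_lt_0 n); pose proof (pochhammer_pos m n Hm); pose proof (pos_INR n).
  field; repeat split; lra.
Qed.

Lemma kummer_radius (m : R) : 0 < m -> CV_radius (kummer_coef m) = p_infty.
Proof.
  intros Hm; apply CV_radius_infinite_DAlembert.
  { intros n; pose proof (kummer_coef_pos m n Hm); lra. }
  apply is_lim_seq_le_le with (u := fun _ => 0) (w := fun n => (m + 1) * / INR (S n)).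
  - intros n; split; [apply Rabs_pos|].
    rewrite kummer_coef_ratio, S_INR by exact Hm; pose proof (pos_INR n).
    rewrite Rabs_pos_eq by (apply Rdiv_le_0_compat; nra).
    apply (Rmult_le_reg_r ((INR n + 1) * (INR n + 1))); [nra|].
    field_simplify; [nra|lra|lra].
  - apply is_lim_seq_const.
  - replace (Finite 0) with (Rbar_mult (m + 1) (Rbar_inv p_infty))
      by (simpl; f_equal; ring).
    apply is_lim_seq_scal_l, is_lim_seq_inv; [|discriminate].
    apply is_lim_seq_ext with (fun n => INR n + 1); [intros n; now rewrite S_INR|].
    eapply is_lim_seq_plus; [apply is_lim_seq_INR|apply is_lim_seq_const|reflexivity].
Qed.

Lemma kummer_ex_series (m z : R) : 0 < m -> ex_series (fun k => kummer_coef m k * z ^ k).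
Proof.
  intros Hm; pose proof (CV_radius_inside (kummer_coef m) z) as H.
  rewrite kummer_radius in H by exact Hm; destruct (H I) as [l Hl].
  exists l; now apply is_pseries_R.
Qed.

(* For z >= 0 all terms are nonnegative and the constant term is 1. *)
Lemma hyp1F1_ge_1 (m z : R) : 0 < m -> 0 <= z -> 1 <= hyp1F1 m 1 z.
Proof.
  intros Hm Hz; rewrite hyp1F1_PSeries; unfold PSeries.
  rewrite Series_incr_1 by now apply kummer_ex_series.
  replace (kummer_coef m 0 * z ^ 0) with 1 by (unfold kummer_coef; simpl; field).
  assert (Htail : 0 <= Series (fun k => kummer_coef m (S k) * z ^ S k)).
  { replace 0 with (Series (fun _ : nat => 0)).
    2: { rewrite (Series_ext _ (fun _ : nat => 0 * 1)) by (intros; ring).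
         rewrite Series_scal_l; ring. }
    apply Series_le.
    - intros n; split; [lra|].
      apply Rmult_le_pos; [left; now apply kummer_coef_pos|now apply pow_le].
    - apply (ex_series_incr_1 (fun k => kummer_coef m k * z ^ k)).
      now apply kummer_ex_series. }
  lra.
Qed.

Lemma bounded_of_eventually_nonincreasing (u : nat -> R) (N : nat) :
  (forall n, 0 <= u n) -> (forall n, (N <= n)%nat -> u (S n) <= u n) ->
  forall n, u n <= sum_f_R0 u N.
Proof.
  intros Hpos Hdec.
  assert (Hhead : forall M n, (n <= M)%nat -> u n <= sum_f_R0 u M).
  { induction M as [|M IH]; intros n Hn.
    - replace n with 0%nat by lia; simpl; lra.
    - simpl; destruct (Nat.eq_dec n (S M)) as [->|Hne].
      + pose proof (cond_pos_sum u M Hpos); lra.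
      + pose proof (IH n ltac:(lia)); pose proof (Hpos (S M)); lra. }
  assert (Htail : forall k, u (N + k)%nat <= u N).
  { induction k as [|k IH]; [rewrite Nat.add_0_r; lra|].
    rewrite Nat.add_succ_r; eapply Rle_trans; [apply Hdec; lia|exact IH]. }
  intros n; destruct (Compare_dec.le_lt_dec n N) as [Hn|Hn]; [now apply Hhead|].
  replace n with (N + (n - N))%nat by lia.
  eapply Rle_trans; [apply Htail|apply Hhead; lia].
Qed.

(* (m)_n / n! grows at most geometrically, with any ratio beta > 1: the ratio
   of consecutive terms of (m)_n / (n! beta^n) is (m+n)/((n+1) beta) -> 1/beta. *)
Lemma pochhammer_fact_geometric_bound (m beta : R) : 0 < m -> 1 < beta ->
  exists C, 0 < C /\ forall n, pochhammer m n / INR (Factorial.fact n) <= C * beta ^ n.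
Proof.
  intros Hm Hb.
  set (u := fun n => pochhammer m n / (INR (Factorial.fact n) * beta ^ n)).
  assert (Hu : forall n, 0 < u n).
  { intros n; apply Rdiv_lt_0_compat; [now apply pochhammer_pos|].
    apply Rmult_lt_0_compat; [apply INR_fact_lt_0|apply pow_lt; lra]. }
  destruct (nfloor_ex (m / (beta - 1))) as [N [_ HN]]; [apply Rdiv_le_0_compat; lra|].
  assert (Hdec : forall n, (N <= n)%nat -> u (S n) <= u n).
  { intros n Hn; apply le_INR in Hn.
    assert (Hratio : u (S n) = u n * ((m + INR n) / ((INR n + 1) * beta))).
    { unfold u; simpl pochhammer; simpl pow.
      change (Factorial.fact (S n)) with (S n * Factorial.fact n)%nat.
      rewrite mult_INR, S_INR.
      pose proof (INR_fact_lt_0 n); pose proof (pos_INR n).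
      assert (0 < beta ^ n) by (apply pow_lt; lra).
      field; repeat split; lra. }
    assert (Hm' : m < (INR n + 1) * (beta - 1)).
    { apply (Rmult_lt_compat_r (beta - 1)) in HN; [|lra].
      unfold Rdiv in HN; rewrite Rmult_assoc, Rinv_l, Rmult_1_r in HN by lra; nra. }
    rewrite Hratio; apply Rle_trans with (u n * 1); [|lra].
    apply Rmult_le_compat_l; [left; apply Hu|].
    pose proof (pos_INR n).
    apply (Rmult_le_reg_r ((INR n + 1) * beta)); [nra|].
    unfold Rdiv; rewrite Rmult_assoc, Rinv_l by nra; nra. }
  pose proof (bounded_of_eventually_nonincreasing u N (fun n => Rlt_le _ _ (Hu n)) Hdec)
    as Hbound.
  exists (sum_f_R0 u N); split; [pose proof (Hbound N); pose proof (Hu N); lra|].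
  intros n; specialize (Hbound n).
  assert (0 < beta ^ n) by (apply pow_lt; lra); pose proof (INR_fact_lt_0 n).
  replace (pochhammer m n / INR (Factorial.fact n)) with (u n * beta ^ n)
    by (unfold u; field; lra).
  now apply Rmult_le_compat_r; [lra|].
Qed.

(* 1F1(m;1;z) <= C e^{beta z} for z >= 0, by termwise comparison with the
   exponential series, since kummer_coef m n = ((m)_n / n!) / n!. *)
Lemma hyp1F1_exp_bound (m beta : R) : 0 < m -> 1 < beta ->
  exists C, 0 < C /\ forall z, 0 <= z -> hyp1F1 m 1 z <= C * exp (beta * z).
Proof.
  intros Hm Hb; destruct (pochhammer_fact_geometric_bound m beta Hm Hb) as [C [HC HCb]].
  exists C; split; [exact HC|]; intros z Hz.
  assert (Hexp : is_series (fun n => C * (/ INR (Factorial.fact n) * (beta * z) ^ n))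
                           (C * exp (beta * z))).
  { apply (is_series_scal_l C (fun n => / INR (Factorial.fact n) * (beta * z) ^ n)).
    apply is_pseries_R, is_exp_Reals. }
  rewrite hyp1F1_PSeries; unfold PSeries; rewrite <- (is_series_unique _ _ Hexp).
  apply Series_le; [|eexists; exact Hexp].
  intros n; split.
  { apply Rmult_le_pos; [left; now apply kummer_coef_pos|now apply pow_le]. }
  pose proof (HCb n); pose proof (INR_fact_lt_0 n); pose proof (pow_le z n Hz).
  unfold kummer_coef; rewrite Rpow_mult_distr.
  replace (pochhammer m n / (INR (Factorial.fact n) * INR (Factorial.fact n)) * z ^ n)
    with (pochhammer m n / INR (Factorial.fact n) * (/ INR (Factorial.fact n) * z ^ n))
    by (field; lra).
  replace (C * (/ INR (Factorial.fact n) * (beta ^ n * z ^ n)))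
    with (C * beta ^ n * (/ INR (Factorial.fact n) * z ^ n)) by ring.
  apply Rmult_le_compat_r; [|exact H].
  apply Rmult_le_pos; [left; now apply Rinv_0_lt_compat|exact H1].
Qed.

Lemma hyp1F1_ex_derive (m z : R) : 0 < m -> ex_derive (hyp1F1 m 1) z.
Proof.
  intros Hm; apply ex_derive_ext with (PSeries (kummer_coef m));
    [intros; now rewrite hyp1F1_PSeries|].
  apply ex_derive_PSeries; rewrite kummer_radius by exact Hm; exact I.
Qed.

Lemma exp_le (x y : R) : x <= y -> exp x <= exp y.
Proof. intros [H|H]; [left; now apply exp_increasing|subst; lra]. Qed.

Lemma RInt_const_R (a b c : R) : RInt (fun _ => c) a b = (b - a) * c.
Proof. now rewrite RInt_const. Qed.

Definition rs_const (m Kr : R) : R := Rpower (m / (m + Kr)) m.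

(* The Rician-shadowed density with shape m, Rician factor Kr and inverse scale A:
   A c e^{-A g} 1F1(m;1;kappa A g) with kappa = Kr/(m+Kr).  The density f_RS is
   the case A = (1 + Kbar)/gbar. *)
Definition rs_density (m Kr A g : R) : R :=
  A * rs_const m Kr * exp (- (A * g)) * hyp1F1 m 1 (Kr / (m + Kr) * (A * g)).

Lemma f_RS_rs_density (p m K1 K2 gbar Kr g : R) :
  f_RS p m K1 K2 gbar Kr g = rs_density m Kr ((1 + Kbar p K1 K2) / gbar) g.
Proof.
  unfold f_RS, rs_density, rs_const; f_equal; [do 2 f_equal; unfold Rdiv; ring|].
  f_equal; unfold Rdiv; rewrite Rinv_mult; ring.
Qed.

Lemma F_RS_rs_density (p m K1 K2 gbar Kr x : R) :
  F_RS p m K1 K2 gbar Kr x = RInt (rs_density m Kr ((1 + Kbar p K1 K2) / gbar)) 0 x.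
Proof. apply RInt_ext; intros; apply f_RS_rs_density. Qed.

Section RicianShadowed.
Variables (m Kr : R).
Hypotheses (Hm : 0 < m) (HKr : 0 < Kr).

Lemma rs_const_pos : 0 < rs_const m Kr.
Proof. apply exp_pos. Qed.

Lemma rs_density_ex_derive (A g : R) : ex_derive (rs_density m Kr A) g.
Proof. unfold rs_density; auto_derive; now apply hyp1F1_ex_derive. Qed.

Lemma rs_density_continuous (A g : R) : continuous (rs_density m Kr A) g.
Proof. apply (ex_derive_continuous (rs_density m Kr A)), rs_density_ex_derive. Qed.

Lemma rs_density_ex_RInt (A a b : R) : ex_RInt (rs_density m Kr A) a b.
Proof. apply (@ex_RInt_continuous R_CompleteNormedModule); intros; apply rs_density_continuous. Qed.

(* Lower bound from 1F1 >= 1: the density dominates the exponential A c e^{-A g}. *)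
Lemma rs_density_lower (A g : R) : 0 < A -> 0 <= g ->
  A * rs_const m Kr * exp (- (A * g)) <= rs_density m Kr A g.
Proof.
  intros HA Hg; unfold rs_density.
  assert (Harg : 0 <= Kr / (m + Kr) * (A * g))
    by (apply Rmult_le_pos; [apply Rdiv_le_0_compat|]; nra).
  pose proof (hyp1F1_ge_1 m _ Hm Harg); pose proof rs_const_pos.
  pose proof (exp_pos (- (A * g))).
  rewrite <- (Rmult_1_r (A * rs_const m Kr * exp (- (A * g)))) at 1.
  apply Rmult_le_compat_l; [|exact H]; left; repeat apply Rmult_lt_0_compat; lra.
Qed.

(* Upper bound from 1F1(z) <= C e^{beta z}: the density decays at rate
   A (1 - beta kappa), uniformly in the scale A. *)
Lemma rs_density_upper (beta : R) : 1 < beta ->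
  exists C, 0 < C /\ forall A g, 0 < A -> 0 <= g ->
    rs_density m Kr A g <= A * C * exp (- (A * (1 - beta * (Kr / (m + Kr)))) * g).
Proof.
  intros Hb; destruct (hyp1F1_exp_bound m beta Hm Hb) as [C [HC HCb]].
  pose proof rs_const_pos.
  exists (rs_const m Kr * C); split; [now apply Rmult_lt_0_compat|].
  intros A g HA Hg; unfold rs_density.
  assert (Harg : 0 <= Kr / (m + Kr) * (A * g))
    by (apply Rmult_le_pos; [apply Rdiv_le_0_compat|]; nra).
  pose proof (exp_pos (- (A * g))).
  replace (- (A * (1 - beta * (Kr / (m + Kr)))) * g)
    with (- (A * g) + beta * (Kr / (m + Kr) * (A * g))) by ring.
  rewrite exp_plus.
  replace (A * (rs_const m Kr * C) * (exp (- (A * g)) * exp (beta * (Kr / (m + Kr) * (A * g)))))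
    with (A * rs_const m Kr * exp (- (A * g)) * (C * exp (beta * (Kr / (m + Kr) * (A * g)))))
    by ring.
  apply Rmult_le_compat_l; [left; repeat apply Rmult_lt_0_compat; lra|now apply HCb].
Qed.

(* With beta = 1/kappa the density is bounded by A C, so its CDF is O(A x). *)
Lemma rs_cdf_upper : exists C, 0 < C /\ forall A x, 0 < A -> 0 <= x ->
  RInt (rs_density m Kr A) 0 x <= A * C * x.
Proof.
  assert (Hb : 1 < (m + Kr) / Kr)
    by (apply (Rmult_lt_reg_r Kr); [lra|]; field_simplify; lra).
  destruct (rs_density_upper _ Hb) as [C [HC HCb]].
  exists C; split; [exact HC|]; intros A x HA Hx.
  apply Rle_trans with (RInt (fun _ => A * C) 0 x);
    [|rewrite RInt_const_R; right; ring].
  apply RInt_le; [exact Hx|apply rs_density_ex_RInt|apply ex_RInt_const|].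
  intros g Hg; eapply Rle_trans; [apply HCb; lra|].
  replace (- (A * (1 - (m + Kr) / Kr * (Kr / (m + Kr)))) * g) with 0 by (field; lra).
  rewrite exp_0; lra.
Qed.

(* On [0, x] the density is at least A c e^{-A x}. *)
Lemma rs_cdf_lower (A x : R) : 0 < A -> 0 <= x ->
  A * rs_const m Kr * x * exp (- (A * x)) <= RInt (rs_density m Kr A) 0 x.
Proof.
  intros HA Hx; pose proof rs_const_pos.
  apply Rle_trans with (RInt (fun _ => A * rs_const m Kr * exp (- (A * x))) 0 x);
    [rewrite RInt_const_R; right; ring|].
  apply RInt_le; [exact Hx|apply ex_RInt_const|apply rs_density_ex_RInt|].
  intros g Hg; eapply Rle_trans; [|apply rs_density_lower; lra].
  apply Rmult_le_compat_l; [nra|apply exp_le; nra].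
Qed.

(* For a fixed scale the density decays exponentially
   (beta = (m + 2 Kr)/(2 Kr) gives the rate A m / (2 (m + Kr))). *)
Lemma rs_density_decay (A : R) : 0 < A ->
  exists U d, 0 < U /\ 0 < d /\ forall g, 0 <= g -> rs_density m Kr A g <= U * exp (- d * g).
Proof.
  intros HA.
  assert (Hb : 1 < (m + 2 * Kr) / (2 * Kr))
    by (apply (Rmult_lt_reg_r (2 * Kr)); [lra|]; field_simplify; lra).
  destruct (rs_density_upper _ Hb) as [C [HC HCb]].
  exists (A * C), (A * (m / (2 * (m + Kr)))); split; [nra|split].
  { apply Rmult_lt_0_compat; [exact HA|apply Rdiv_lt_0_compat; lra]. }
  intros g Hg; eapply Rle_trans; [now apply HCb|right].
  do 3 f_equal; field; lra.
Qed.

End RicianShadowed.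

Lemma mixture_le (p a b u : R) : 0 <= p <= 1 -> a <= u -> b <= u -> p * a + (1 - p) * b <= u.
Proof. intros; nra. Qed.

Lemma mixture_ge (p a b l : R) : 0 <= p <= 1 -> l <= a -> l <= b -> l <= p * a + (1 - p) * b.
Proof. intros; nra. Qed.

Lemma exp_decay_weaken (U U' d d' g : R) : 0 <= U <= U' -> d' <= d -> 0 <= g ->
  U * exp (- d * g) <= U' * exp (- d' * g).
Proof.
  intros HU Hd Hg; pose proof (exp_pos (- d * g)).
  apply Rmult_le_compat; [lra|lra|lra|apply exp_le; nra].
Qed.

Section AlternateRicianShadowed.
Variables (p m K1 K2 : R).
Hypotheses (Hp : 0 <= p <= 1) (Hm : 0 < m) (HK1 : 0 < K1) (HK2 : 0 < K2).

Lemma ars_scale_pos (gb : R) : 0 < gb -> 0 < (1 + Kbar p K1 K2) / gb.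
Proof. intros Hgb; apply Rdiv_lt_0_compat; [unfold Kbar; nra|exact Hgb]. Qed.

Lemma f_RS_ex_derive (gb Kr g : R) : ex_derive (f_RS p m K1 K2 gb Kr) g.
Proof.
  apply ex_derive_ext with (rs_density m Kr ((1 + Kbar p K1 K2) / gb));
    [intros; symmetry; apply f_RS_rs_density|now apply rs_density_ex_derive].
Qed.

Lemma F_RS_is_derive (gb Kr x : R) :
  is_derive (F_RS p m K1 K2 gb Kr) x (f_RS p m K1 K2 gb Kr x).
Proof.
  unfold F_RS; apply is_derive_RInt with 0.
  - apply filter_forall; intros z; apply (@RInt_correct R_CompleteNormedModule).
    apply ex_RInt_ext with (rs_density m Kr ((1 + Kbar p K1 K2) / gb));
      [intros; symmetry; apply f_RS_rs_density|now apply rs_density_ex_RInt].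
  - apply (ex_derive_continuous (f_RS p m K1 K2 gb Kr)), f_RS_ex_derive.
Qed.

Lemma f_ARS_continuous (gb g : R) : continuous (f_ARS p m K1 K2 gb) g.
Proof.
  apply (ex_derive_continuous (f_ARS p m K1 K2 gb)); unfold f_ARS.
  auto_derive; repeat split; apply f_RS_ex_derive.
Qed.

Lemma F_ARS_continuous (gb x : R) : continuous (F_ARS p m K1 K2 gb) x.
Proof.
  apply (ex_derive_continuous (F_ARS p m K1 K2 gb)); unfold F_ARS.
  auto_derive; repeat split; eexists; apply F_RS_is_derive.
Qed.

(* F_ARS(x) = O(x / gbar), uniformly in gbar: the source of diversity order 1. *)
Lemma F_ARS_upper : exists U, 0 < U /\ forall gb x, 0 < gb -> 0 <= x ->
  F_ARS p m K1 K2 gb x <= (1 + Kbar p K1 K2) / gb * U * x.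
Proof.
  destruct (rs_cdf_upper m K1 Hm HK1) as [C1 [HC1 HC1b]].
  destruct (rs_cdf_upper m K2 Hm HK2) as [C2 [HC2 HC2b]].
  exists (Rmax C1 C2); split; [apply (Rlt_le_trans _ _ _ HC1), Rmax_l|].
  intros gb x Hgb Hx; pose proof (ars_scale_pos gb Hgb) as HA.
  unfold F_ARS; rewrite !F_RS_rs_density; apply mixture_le; [exact Hp| |].
  - eapply Rle_trans; [now apply HC1b|].
    apply Rmult_le_compat_r, Rmult_le_compat_l; [lra|lra|apply Rmax_l].
  - eapply Rle_trans; [now apply HC2b|].
    apply Rmult_le_compat_r, Rmult_le_compat_l; [lra|lra|apply Rmax_r].
Qed.

Lemma F_ARS_lower : exists L, 0 < L /\ forall gb x, 0 < gb -> 0 <= x ->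
  (1 + Kbar p K1 K2) / gb * L * x * exp (- ((1 + Kbar p K1 K2) / gb * x))
    <= F_ARS p m K1 K2 gb x.
Proof.
  pose proof (rs_const_pos m K1); pose proof (rs_const_pos m K2).
  exists (Rmin (rs_const m K1) (rs_const m K2)); split; [now apply Rmin_glb_lt|].
  intros gb x Hgb Hx; pose proof (ars_scale_pos gb Hgb) as HA.
  set (A := (1 + Kbar p K1 K2) / gb) in *.
  pose proof (exp_pos (- (A * x))).
  unfold F_ARS; rewrite !F_RS_rs_density; fold A; apply mixture_ge; [exact Hp| |].
  - eapply Rle_trans; [|now apply rs_cdf_lower].
    apply Rmult_le_compat_r, Rmult_le_compat_r, Rmult_le_compat_l;
      [lra|lra|lra|apply Rmin_l].
  - eapply Rle_trans; [|now apply rs_cdf_lower].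
    apply Rmult_le_compat_r, Rmult_le_compat_r, Rmult_le_compat_l;
      [lra|lra|lra|apply Rmin_r].
Qed.

Lemma f_ARS_lower : exists L, 0 < L /\ forall gb g, 0 < gb -> 0 <= g ->
  (1 + Kbar p K1 K2) / gb * L * exp (- ((1 + Kbar p K1 K2) / gb * g))
    <= f_ARS p m K1 K2 gb g.
Proof.
  pose proof (rs_const_pos m K1); pose proof (rs_const_pos m K2).
  exists (Rmin (rs_const m K1) (rs_const m K2)); split; [now apply Rmin_glb_lt|].
  intros gb g Hgb Hg; pose proof (ars_scale_pos gb Hgb) as HA.
  set (A := (1 + Kbar p K1 K2) / gb) in *.
  pose proof (exp_pos (- (A * g))).
  unfold f_ARS; rewrite !f_RS_rs_density; fold A; apply mixture_ge; [exact Hp| |].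
  - eapply Rle_trans; [|now apply rs_density_lower].
    apply Rmult_le_compat_r, Rmult_le_compat_l; [lra|lra|apply Rmin_l].
  - eapply Rle_trans; [|now apply rs_density_lower].
    apply Rmult_le_compat_r, Rmult_le_compat_l; [lra|lra|apply Rmin_r].
Qed.

Lemma f_ARS_decay (gb : R) : 0 < gb ->
  exists U d, 0 < U /\ 0 < d /\ forall g, 0 <= g -> f_ARS p m K1 K2 gb g <= U * exp (- d * g).
Proof.
  intros Hgb; pose proof (ars_scale_pos gb Hgb) as HA.
  destruct (rs_density_decay m K1 Hm HK1 _ HA) as [U1 [d1 [HU1 [Hd1 Hb1]]]].
  destruct (rs_density_decay m K2 Hm HK2 _ HA) as [U2 [d2 [HU2 [Hd2 Hb2]]]].
  exists (Rmax U1 U2), (Rmin d1 d2); split; [apply (Rlt_le_trans _ _ _ HU1), Rmax_l|].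
  split; [now apply Rmin_glb_lt|].
  intros g Hg; unfold f_ARS; rewrite !f_RS_rs_density; apply mixture_le; [exact Hp| |].
  - eapply Rle_trans; [now apply Hb1|].
    apply exp_decay_weaken; [split; [lra|apply Rmax_l]|apply Rmin_l|exact Hg].
  - eapply Rle_trans; [now apply Hb2|].
    apply exp_decay_weaken; [split; [lra|apply Rmax_r]|apply Rmin_r|exact Hg].
Qed.

Lemma F_ARS_nonneg (gb x : R) : 0 < gb -> 0 <= x -> 0 <= F_ARS p m K1 K2 gb x.
Proof.
  intros Hgb Hx; destruct F_ARS_lower as [L [HL HLb]].
  eapply Rle_trans; [|now apply HLb]; pose proof (ars_scale_pos gb Hgb).
  apply Rmult_le_pos; [|left; apply exp_pos].
  apply Rmult_le_pos; [apply Rmult_le_pos|]; lra.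
Qed.

Lemma f_ARS_nonneg (gb g : R) : 0 < gb -> 0 <= g -> 0 <= f_ARS p m K1 K2 gb g.
Proof.
  intros Hgb Hg; destruct f_ARS_lower as [L [HL HLb]].
  eapply Rle_trans; [|now apply HLb]; pose proof (ars_scale_pos gb Hgb).
  apply Rmult_le_pos; [|left; apply exp_pos].
  apply Rmult_le_pos; lra.
Qed.

End AlternateRicianShadowed.

(* A continuous function that is nonnegative on [0, oo) and whose integrals over
   [0, b] stay below M is integrable on [0, oo): its improper integral is the
   supremum of these nondecreasing partial integrals. *)
Lemma RInt_gen_nonneg_bounded (phi : R -> R) (M : R) :
  (forall x, continuous phi x) -> (forall x, 0 <= x -> 0 <= phi x) ->
  (forall b, 0 <= b -> RInt phi 0 b <= M) ->
  RInt_gen phi (at_point 0) (Rbar_locally p_infty) <= M /\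
  forall b, 0 <= b -> RInt phi 0 b <= RInt_gen phi (at_point 0) (Rbar_locally p_infty).
Proof.
  intros Hc Hpos Hb.
  assert (Hex : forall a b, ex_RInt phi a b)
    by (intros; apply (@ex_RInt_continuous R_CompleteNormedModule); intros; apply Hc).
  assert (Hmono : forall b0 b, 0 <= b0 <= b -> RInt phi 0 b0 <= RInt phi 0 b).
  { intros b0 b Hbb; rewrite <- (RInt_Chasles phi 0 b0 b) by auto.
    assert (0 <= RInt phi b0 b) by (apply RInt_ge_0; [lra|auto|intros; apply Hpos; lra]).
    change (plus (RInt phi 0 b0) (RInt phi b0 b)) with (RInt phi 0 b0 + RInt phi b0 b).
    lra. }
  set (E := fun y => exists b, 0 <= b /\ y = RInt phi 0 b).
  assert (HE : bound E) by (exists M; intros y [b [Hb0 ->]]; now apply Hb).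
  destruct (completeness E HE) as [L [HLub HLleast]]; [exists (RInt phi 0 0), 0; split; lra|].
  assert (HL : is_RInt_gen phi (at_point 0) (Rbar_locally p_infty) L).
  { intros P [eps Heps].
    assert (Hclose : exists b0, 0 <= b0 /\ L - eps < RInt phi 0 b0).
    { apply Classical_Prop.NNPP; intros Hn.
      assert (Hub : is_upper_bound E (L - eps)).
      { intros y [b [Hb0 ->]]; apply Rnot_lt_le; intros Hl; apply Hn; now exists b. }
      pose proof (HLleast _ Hub); destruct eps; simpl in *; lra. }
    destruct Hclose as [b0 [Hb0 Hlt]].
    exists (fun a => a = 0) (fun b => b0 < b); [reflexivity|now exists b0|].
    intros a b -> Hbb; exists (RInt phi 0 b); split;
      [apply (@RInt_correct R_CompleteNormedModule); auto|].
    apply Heps; unfold ball; simpl; unfold AbsRing_ball, abs, minus, plus, opp; simpl.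
    pose proof (Hmono b0 b ltac:(lra)).
    assert (RInt phi 0 b <= L) by (apply HLub; exists b; split; [lra|reflexivity]).
    apply Rabs_def1; lra. }
  rewrite (is_RInt_gen_unique _ _ HL); split.
  - apply HLleast; intros y [b [Hb0 ->]]; now apply Hb.
  - intros b Hb0; apply HLub; now exists b.
Qed.

Lemma RInt_linear_exp_bound (K d b : R) : 0 <= K -> 0 < d -> 0 <= b ->
  RInt (fun g => K * ((g + 1) * exp (- d * g))) 0 b <= K * (1 / d + 1 / (d * d)).
Proof.
  intros HK Hd Hb.
  set (G := fun g => - K * ((g + 1) / d + 1 / (d * d)) * exp (- d * g)).
  assert (HG : is_RInt (fun g => K * ((g + 1) * exp (- d * g))) 0 b (minus (G b) (G 0))).
  { apply (@is_RInt_derive R_CompleteNormedModule).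
    - intros x _; unfold G; auto_derive; [exact I|field; lra].
    - intros x _; apply (ex_derive_continuous (fun g => K * ((g + 1) * exp (- d * g)))).
      auto_derive; exact I. }
  rewrite (is_RInt_unique _ _ _ _ HG); unfold minus, plus, opp; simpl; unfold G.
  rewrite Rmult_0_r, exp_0.
  assert (0 <= K * ((b + 1) / d + 1 / (d * d)) * exp (- d * b)).
  { apply Rmult_le_pos; [apply Rmult_le_pos; [exact HK|]|left; apply exp_pos].
    assert (0 < (b + 1) / d) by (apply Rdiv_lt_0_compat; lra).
    assert (0 < 1 / (d * d)) by (apply Rdiv_lt_0_compat; nra); lra. }
  replace (K * (1 / d + 1 / (d * d))) with (K * ((0 + 1) / d + 1 / (d * d)) * 1)
    by (field; lra).
  lra.
Qed.

(* Rs = 2^Rt > 1 for a positive target rate, so the CDF argument Rs g + Rs - 1 is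
   positive. *)
Lemma Rs_gt_1 (Rt : R) : 0 < Rt -> 1 < Rs Rt.
Proof.
  intros H; unfold Rs, Rpower; rewrite <- exp_0; apply exp_increasing.
  assert (0 < ln 2) by (rewrite <- ln_1; apply ln_increasing; lra); nra.
Qed.

Section Outage.
Variables (Rt pB mB KB1 KB2 pE mE KE1 KE2 gE : R).
Hypotheses (HRt : 0 < Rt)
  (HpB : 0 <= pB <= 1) (HmB : 0 < mB) (HKB1 : 0 < KB1) (HKB2 : 0 < KB2)
  (HpE : 0 <= pE <= 1) (HmE : 0 < mE) (HKE1 : 0 < KE1) (HKE2 : 0 < KE2) (HgE : 0 < gE).

Definition outage_integrand (gB g : R) : R :=
  F_ARS pB mB KB1 KB2 gB (Rs Rt * g + Rs Rt - 1) * f_ARS pE mE KE1 KE2 gE g.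

Lemma outage_integrand_continuous (gB g : R) : continuous (outage_integrand gB) g.
Proof.
  apply (@continuous_mult R_UniformSpace R_AbsRing
           (fun g => F_ARS pB mB KB1 KB2 gB (Rs Rt * g + Rs Rt - 1))).
  - apply (continuous_comp (fun g => Rs Rt * g + Rs Rt - 1) (F_ARS pB mB KB1 KB2 gB)).
    + apply (ex_derive_continuous (fun g => Rs Rt * g + Rs Rt - 1)); auto_derive; exact I.
    + now apply F_ARS_continuous.
  - now apply f_ARS_continuous.
Qed.

Lemma outage_integrand_nonneg (gB g : R) : 0 < gB -> 0 <= g -> 0 <= outage_integrand gB g.
Proof.
  intros HgB Hg; pose proof (Rs_gt_1 Rt HRt); unfold outage_integrand.
  apply Rmult_le_pos; [apply F_ARS_nonneg; auto; nra|now apply f_ARS_nonneg].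
Qed.

(* Upper bound O(1/gB) times an integrable profile, from F_B(x) = O(x/gB) and the
   exponential decay of f_E. *)
Lemma outage_integrand_upper : exists K d, 0 < K /\ 0 < d /\ forall gB g, 0 < gB -> 0 <= g ->
  outage_integrand gB g <= K / gB * ((g + 1) * exp (- d * g)).
Proof.
  pose proof (Rs_gt_1 Rt HRt) as HR; set (R := Rs Rt) in *.
  destruct (F_ARS_upper pB mB KB1 KB2 HpB HmB HKB1 HKB2) as [UB [HUB HUBb]].
  destruct (f_ARS_decay pE mE KE1 KE2 HpE HmE HKE1 HKE2 gE HgE) as [UE [d [HUE [Hd HUEb]]]].
  set (kB := 1 + Kbar pB KB1 KB2).
  assert (HkB : 0 < kB) by (unfold kB, Kbar; nra).
  exists (kB * UB * R * UE), d; split; [repeat apply Rmult_lt_0_compat; lra|split; [exact Hd|]].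
  intros gB g HgB Hg; unfold outage_integrand; fold R.
  assert (HX : 0 <= R * g + R - 1) by nra.
  assert (HA : 0 < kB / gB) by (apply Rdiv_lt_0_compat; lra).
  pose proof (f_ARS_nonneg pE mE KE1 KE2 HpE HmE HKE1 HKE2 gE g HgE Hg).
  replace (kB * UB * R * UE / gB * ((g + 1) * exp (- d * g)))
    with ((kB / gB * UB * (R * (g + 1))) * (UE * exp (- d * g))) by (field; lra).
  apply Rmult_le_compat; [apply F_ARS_nonneg; auto|exact H| |now apply HUEb].
  eapply Rle_trans; [now apply HUBb|].
  apply Rmult_le_compat_l; [apply Rmult_le_pos; lra|nra].
Qed.

(* On [0, 1] the integrand is at least D/gB once gB >= 1: there
   F_B(Rs g + Rs - 1) >= (kB/gB) L_B (Rs - 1) e^{-kB (2 Rs - 1)} and f_E is bounded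
   below by a positive constant. *)
Lemma outage_integrand_lower : exists D, 0 < D /\ forall gB g, 1 <= gB -> 0 <= g <= 1 ->
  D / gB <= outage_integrand gB g.
Proof.
  pose proof (Rs_gt_1 Rt HRt) as HR; set (R := Rs Rt) in *.
  destruct (F_ARS_lower pB mB KB1 KB2 HpB HmB HKB1 HKB2) as [LB [HLB HLBb]].
  destruct (f_ARS_lower pE mE KE1 KE2 HpE HmE HKE1 HKE2) as [LE [HLE HLEb]].
  set (kB := 1 + Kbar pB KB1 KB2) in *; set (kE := 1 + Kbar pE KE1 KE2) in *.
  assert (HkB : 0 < kB) by (unfold kB, Kbar; nra).
  assert (HAE : 0 < kE / gE) by (apply Rdiv_lt_0_compat; [unfold kE, Kbar; nra|exact HgE]).
  set (DB := kB * LB * (R - 1) * exp (- (kB * (2 * R - 1)))).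
  set (DE := kE / gE * LE * exp (- (kE / gE))).
  assert (HDB : 0 < DB) by (unfold DB; pose proof (exp_pos (- (kB * (2 * R - 1))));
                            repeat apply Rmult_lt_0_compat; lra).
  assert (HDE : 0 < DE) by (unfold DE; pose proof (exp_pos (- (kE / gE)));
                            apply Rmult_lt_0_compat; [apply Rmult_lt_0_compat|]; lra).
  exists (DB * DE); split; [now apply Rmult_lt_0_compat|].
  intros gB g HgB Hg; unfold outage_integrand; fold R.
  assert (HA : 0 < kB / gB) by (apply Rdiv_lt_0_compat; lra).
  assert (HAB : kB / gB <= kB).
  { apply (Rmult_le_reg_r gB); [lra|].
    unfold Rdiv; rewrite Rmult_assoc, Rinv_l by lra; nra. }
  set (x := R * g + R - 1).
  assert (Hx : R - 1 <= x <= 2 * R - 1) by (unfold x; nra).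
  assert (HB : DB / gB <= F_ARS pB mB KB1 KB2 gB x).
  { eapply Rle_trans; [|apply HLBb; lra].
    replace (DB / gB) with (kB / gB * LB * (R - 1) * exp (- (kB * (2 * R - 1))))
      by (unfold DB; field; lra).
    apply Rmult_le_compat; [apply Rmult_le_pos; [apply Rmult_le_pos|]; lra|left; apply exp_pos| |].
    - apply Rmult_le_compat_l; [apply Rmult_le_pos|]; lra.
    - apply exp_le, Ropp_le_contravar, Rle_trans with (kB * x);
        [apply Rmult_le_compat_r|apply Rmult_le_compat_l]; lra. }
  assert (HE : DE <= f_ARS pE mE KE1 KE2 gE g).
  { eapply Rle_trans; [|apply HLEb; lra].
    apply Rmult_le_compat_l; [nra|apply exp_le; nra]. }
  replace (DB * DE / gB) with (DB / gB * DE) by (field; lra).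
  apply Rmult_le_compat; [left; apply Rdiv_lt_0_compat; lra|lra|exact HB|exact HE].
Qed.

Lemma Pout_bounds : exists D M, 0 < D /\ 0 < M /\ forall gB, 1 <= gB ->
  D / gB <= Pout Rt pB mB KB1 KB2 gB pE mE KE1 KE2 gE <= M / gB.
Proof.
  destruct outage_integrand_upper as [K [d [HK [Hd HKb]]]].
  destruct outage_integrand_lower as [D [HD HDb]].
  set (M := K * (1 / d + 1 / (d * d))).
  assert (HM : 0 < M).
  { assert (0 < 1 / d) by (apply Rdiv_lt_0_compat; lra).
    assert (0 < 1 / (d * d)) by (apply Rdiv_lt_0_compat; nra).
    unfold M; apply Rmult_lt_0_compat; lra. }
  exists D, M; split; [exact HD|split; [exact HM|]]; intros gB HgB.
  assert (Hex : forall a b, ex_RInt (outage_integrand gB) a b).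
  { intros; apply (@ex_RInt_continuous R_CompleteNormedModule); intros.
    apply outage_integrand_continuous. }
  assert (Hpartial : forall b, 0 <= b -> RInt (outage_integrand gB) 0 b <= M / gB).
  { intros b Hb.
    apply Rle_trans with (RInt (fun g => K / gB * ((g + 1) * exp (- d * g))) 0 b).
    - apply RInt_le; [exact Hb|apply Hex| |intros g Hg; apply HKb; lra].
      apply (@ex_RInt_continuous R_CompleteNormedModule); intros.
      apply (ex_derive_continuous (fun g => K / gB * ((g + 1) * exp (- d * g)))).
      auto_derive; exact I.
    - replace (M / gB) with (K / gB * (1 / d + 1 / (d * d))) by (unfold M; field; lra).
      apply RInt_linear_exp_bound; [apply Rlt_le, Rdiv_lt_0_compat; lra|exact Hd|exact Hb]. }
  destruct (RInt_gen_nonneg_bounded (outage_integrand gB) (M / gB)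
              (outage_integrand_continuous gB)
              (fun g => outage_integrand_nonneg gB g ltac:(lra)) Hpartial) as [Hup Hlow].
  change (fun g => F_ARS pB mB KB1 KB2 gB (Rs Rt * g + Rs Rt - 1) * f_ARS pE mE KE1 KE2 gE g)
    with (outage_integrand gB); unfold Pout; split; [|exact Hup].
  apply Rle_trans with (RInt (outage_integrand gB) 0 1); [|apply Hlow; lra].
  apply Rle_trans with (RInt (fun _ => D / gB) 0 1); [rewrite RInt_const_R; lra|].
  apply RInt_le; [lra|apply ex_RInt_const|apply Hex|intros g Hg; apply HDb; lra].
Qed.

End Outage.

(* (c - ln y)/ln y = c/ln y - 1 -> -1 as y -> oo. *)
Lemma log_shift_ratio_limit (c : R) : is_lim (fun y => (c - ln y) / ln y) p_infty (-1).
Proof.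
  apply is_lim_ext_loc with (fun y => c * / ln y + -1).
  { exists 1; intros y Hy.
    assert (0 < ln y) by (rewrite <- ln_1; apply ln_increasing; lra); field; lra. }
  eapply is_lim_plus; [apply is_lim_scal_l, is_lim_inv; [apply is_lim_ln_p|discriminate]
                      |apply is_lim_const|].
  simpl; apply (f_equal (fun z => Some (Finite z))); ring.
Qed.

Lemma log_ratio_limit_of_inverse_bounds (P : R -> R) (D M : R) : 0 < D -> 0 < M ->
  (forall y, 1 <= y -> D / y <= P y <= M / y) ->
  is_lim (fun y => ln (P y) / ln y) p_infty (-1).
Proof.
  intros HD HM Hb.
  apply is_lim_le_le_loc with (fun y => (ln D - ln y) / ln y) (fun y => (ln M - ln y) / ln y);
    [|apply log_shift_ratio_limit|apply log_shift_ratio_limit].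
  exists 1; intros y Hy; destruct (Hb y ltac:(lra)) as [HL HU].
  assert (0 < ln y) by (rewrite <- ln_1; apply ln_increasing; lra).
  assert (0 < D / y) by (apply Rdiv_lt_0_compat; lra).
  rewrite <- !ln_div by lra.
  split; apply Rmult_le_compat_r; try (left; apply Rinv_0_lt_compat; lra);
    apply ln_le; lra.
Qed.

Theorem mainTheorem10 (Rt pB mB KB1 KB2 pE mE KE1 KE2 gE : R) :
  0 < Rt ->
  0 <= pB <= 1 -> 0 < mB -> 0 < KB1 -> 0 < KB2 ->
  0 <= pE <= 1 -> 0 < mE -> 0 < KE1 -> 0 < KE2 -> 0 < gE ->
  is_lim (fun gB => ln (Pout Rt pB mB KB1 KB2 gB pE mE KE1 KE2 gE) / ln gB)
    p_infty (-1).
Proof.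
  intros HRt HpB HmB HKB1 HKB2 HpE HmE HKE1 HKE2 HgE.
  destruct (Pout_bounds Rt pB mB KB1 KB2 pE mE KE1 KE2 gE HRt HpB HmB HKB1 HKB2
              HpE HmE HKE1 HKE2 HgE) as [D [M [HD [HM Hb]]]].
  exact (log_ratio_limit_of_inverse_bounds _ D M HD HM Hb).
Qed.
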